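(* Assume in addition that $f_i'(u)+1\neq 0$ for all $u\in\mathbb R$ and all $1\le i\le k$. Then $\mathcal M_F$ is $0$-modeled on $\mathcal V=(\mathbb R^{3k+2},(\cdot,\cdot),R)$: for every point $P\in\mathbb R^{3k+2}$ there is a linear isometry $\Phi_P:(T_P\mathbb R^{3k+2},g_F|_P)\to(\mathbb R^{3k+2},(\cdot,\cdot))$ with $\Phi_P^*R=R_P$, where $R_P$ is the curvature tensor of $g_F$ at $P$. Equivalently, every tangent space $T_P\mathcal M_F$ admits a normalized basis with respect to $g_F|_P$ and $R_P$. In particular $\mathcal M_F$ is $0$-curvature homogeneous.
   Context: Fix an integer $k\ge 1$ and signs $\varepsilon_1,\dots,\varepsilon_k\in\{\pm1\}$. Let $f_1,\dots,f_k:\mathbb R\to\mathbb R$ be smooth functions and $F=(f_1,\dots,f_k)$. On $\mathbb R^{3k+2}$ with coordinates $(u_0,\dots,u_k,v_0,\dots,v_k,s_1,\dots,s_k)$ let $g_F$ be the symmetric metric whose only nonzero components on coordinate vector fields are (up to symmetry), for $1\le i\le k$ and $0\le i',j\le k$: $g_F(\partial_{u_0},\partial_{u_i})=2f_i(u_i)s_i$, $g_F(\partial_{u_i},\partial_{u_i})=-2u_0s_i$, $g_F(\partial_{u_{i'}},\partial_{v_j})=\delta_{i'j}$, $g_F(\partial_{s_i},\partial_{s_i})=\varepsilon_i$. Write $\mathcal M_F=(\mathbb R^{3k+2},g_F)$, $\nabla$ for its Levi-Civita connection and $R(X,Y,Z,W)=g_F(\nabla_X\nabla_YZ-\nabla_Y\nabla_XZ-\nabla_{[X,Y]}Z,W)$.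 Model: let $V=\mathbb R^{3k+2}$ with basis $\{U_0,\dots,U_k,V_0,\dots,V_k,S_1,\dots,S_k\}$, let $(\cdot,\cdot)$ be the symmetric inner product whose only nonzero values on pairs of basis vectors are $(U_i,V_i)=(V_i,U_i)=1$ for $0\le i\le k$ and $(S_i,S_i)=\varepsilon_i$ for $1\le i\le k$, and let $R$ be the algebraic curvature tensor on $V$ (a 4-linear form with $R(x,y,z,w)=-R(y,x,z,w)=R(z,w,x,y)$ and $R(x,y,z,w)+R(y,z,x,w)+R(z,x,y,w)=0$) whose only nonzero values on 4-tuples of basis vectors are those obtained from $R(U_0,U_i,U_i,S_i)=1$ ($1\le i\le k$) by these symmetries. Set $\mathcal V=(V,(\cdot,\cdot),R)$. Given a vector space $W$ with a symmetric bilinear form $\langle\cdot,\cdot\rangle$ and a 4-tensor $T$, a normalized basis of $(W,\langle\cdot,\cdot\rangle,T)$ is a basis $\{U_0',\dots,U_k',V_0',\dots,V_k',S_1',\dots,S_k'\}$ on which $\langle\cdot,\cdot\rangle$ and $T$ take exactly the values just described for $(\cdot,\cdot)$ and $R$ on the standard basis. *)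

From HB Require Import structures.
From mathcomp Require Import all_boot all_order all_algebra.
From mathcomp Require Import all_classical all_reals all_analysis.
Set Implicit Arguments. Unset Strict Implicit. Unset Printing Implicit Defensive.
Import Order.TTheory GRing.Theory Num.Theory.
Local Open Scope ring_scope.

Section Defs.
Variables (R : realType) (k : nat).

(* dimension 3k+2 = (k+1) + (k+1) + k ; coordinates ordered
   u_0..u_k, v_0..v_k, s_1..s_k *)
Definition dimF := (k.+1 + k.+1 + k)%N.

Definition Uix (i : 'I_k.+1) : 'I_dimF := lshift k (lshift k.+1 i).
Definition Vix (i : 'I_k.+1) : 'I_dimF := lshift k (rshift k.+1 i).
(* Six i is the index of s_{i+1}, i : 'I_k *)
Definition Six (i : 'I_k) : 'I_dimF := rshift (k.+1 + k.+1) i.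
(* U0 = index of u_0, Ui i = index of u_{i+1}, i : 'I_k *)
Definition U0 : 'I_dimF := Uix ord0.
Definition Ui (i : 'I_k) : 'I_dimF := Uix (lift ord0 i).

Definition symE (a b : 'I_dimF) : 'M[R]_dimF := delta_mx a b + delta_mx b a.

(* the matrix of g_F at the point P (P : row vector of coordinates).
   F i is f_{i+1}, eps i is epsilon_{i+1}. *)
Definition gF (F : 'I_k -> R -> R) (eps : 'I_k -> R) (P : 'rV[R]_dimF)
  : 'M[R]_dimF :=
  \sum_(i < k) ((2 * F i (P 0 (Ui i)) * P 0 (Six i)) *: symE U0 (Ui i)
                 + (- 2 * P 0 U0 * P 0 (Six i)) *: delta_mx (Ui i) (Ui i))
  + \sum_(j < k.+1) symE (Uix j) (Vix j)
  + \sum_(i < k) eps i *: delta_mx (Six i) (Six i).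

Definition bform (M : 'M[R]_dimF) (x y : 'rV[R]_dimF) : R :=
  (x *m M *m y^T) 0 0.

Definition partial (h : 'rV[R]_dimF -> R) (a : 'I_dimF) (P : 'rV[R]_dimF) : R :=
  derive1 (fun t : R => h (P + t *: delta_mx 0 a)) 0.

(* Christoffel symbols of the first kind:
   Gamma1 g P d b c = g(nabla_{d_b} d_c, d_d) at P (Koszul formula) *)
Definition Gamma1 (g : 'rV[R]_dimF -> 'M[R]_dimF) (P : 'rV[R]_dimF)
  (d b c : 'I_dimF) : R :=
  (partial (fun Q => g Q d c) b P + partial (fun Q => g Q d b) c P
   - partial (fun Q => g Q b c) d P) / 2.

(* components R(d_a,d_b,d_c,d_d) of the curvature tensor
   R(X,Y,Z,W) = g(nabla_X nabla_Y Z - nabla_Y nabla_X Z - nabla_[X,Y] Z, W)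
   of the Levi-Civita connection, on coordinate fields ([d_a,d_b] = 0):
   g(nabla_a nabla_b d_c, d_d) = d_a Gamma1_{dbc} - g^{ef} Gamma1_{fbc} Gamma1_{ead} *)
Definition Rcoord (g : 'rV[R]_dimF -> 'M[R]_dimF) (P : 'rV[R]_dimF)
  (a b c d : 'I_dimF) : R :=
  partial (fun Q => Gamma1 g Q d b c) a P - partial (fun Q => Gamma1 g Q d a c) b P
  - \sum_(e < dimF) \sum_(f < dimF) (invmx (g P) e f *
       (Gamma1 g P f b c * Gamma1 g P e a d - Gamma1 g P f a c * Gamma1 g P e b d)).

Definition curvP (g : 'rV[R]_dimF -> 'M[R]_dimF) (P : 'rV[R]_dimF)
  (x y z w : 'rV[R]_dimF) : R :=
  \sum_(a < dimF) \sum_(b < dimF) \sum_(c < dimF) \sum_(d < dimF)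
    (x 0 a * y 0 b * z 0 c * w 0 d * Rcoord g P a b c d).

Definition modelG (eps : 'I_k -> R) : 'M[R]_dimF :=
  \sum_(j < k.+1) symE (Uix j) (Vix j)
  + \sum_(i < k) eps i *: delta_mx (Six i) (Six i).

(* model algebraic curvature tensor: the multilinear extension of the
   basis values generated by R(U_0,U_i,U_i,S_i) = 1 under the symmetries,
   i.e. R = sum_i (alpha_i (x) beta_i + beta_i (x) alpha_i) with
   alpha_i = U_0^* /\ U_i^*, beta_i = U_i^* /\ S_i^*. *)
Definition wedge2 (p q : 'I_dimF) (x y : 'rV[R]_dimF) : R :=
  x 0 p * y 0 q - x 0 q * y 0 p.

Definition modelR (x y z w : 'rV[R]_dimF) : R :=
  \sum_(i < k) (wedge2 U0 (Ui i) x y * wedge2 (Ui i) (Six i) z w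
              + wedge2 (Ui i) (Six i) x y * wedge2 U0 (Ui i) z w).

End Defs.

From HB Require Import structures.
From mathcomp Require Import all_boot all_order all_algebra.
From mathcomp Require Import all_classical all_reals all_analysis.
From mathcomp Require Import ring.
Import Order.TTheory GRing.Theory Num.Theory.
Local Open Scope ring_scope.
Set Implicit Arguments. Unset Strict Implicit. Unset Printing Implicit Defensive.

(* The Christoffel symbols G_dbc = g(nabla_{d_b} d_c, d_d) of g_F are affine in
   u_0 and the s_i, with coefficients built from f_i(u_i) and f_i'(u_i). They
   vanish when d is a v-direction, and g_F^{-1} pairs u_j with v_j, so only the
   s-directions survive in the quadratic part of the curvature. Writing
   g_F = sum_i (a_i A_i + b_i B_i) + (model metric) with a_i = 2 f_i(u_i) s_i and
   b_i = -2 u_0 s_i, this gives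
     R_P = sum_i (A_i o Hess a_i + B_i o Hess b_i + eps_i G_i o G_i) / 2,
   o the Kulkarni-Nomizu product and G_i = G_{s_i..}. On this form one checks
   that rescaling u_i by mu_i = sqrt |f_i'(u_i) + 1| and v_i by 1/mu_i, followed
   by shears in the s_i and v directions, carries g_F|_P to the model inner
   product and R_P to the model tensor; f_i' + 1 <> 0 is what makes mu_i
   invertible. *)

Section Indices.
Variable k : nat.
Local Notation n := (dimF k).

Lemma eq_Uix (i j : 'I_k.+1) : (Uix i == Uix j) = (i == j).
Proof. by rewrite /Uix !eq_lshift. Qed.
Lemma eq_Vix (i j : 'I_k.+1) : (Vix i == Vix j) = (i == j).
Proof. by rewrite /Vix eq_lshift eq_rshift. Qed.
Lemma eq_Six (i j : 'I_k) : (Six i == Six j) = (i == j).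
Proof. by rewrite /Six eq_rshift. Qed.
Lemma eq_UixVix (i j : 'I_k.+1) : (Uix i == Vix j) = false.
Proof. by rewrite /Uix /Vix eq_lshift eq_lrshift. Qed.
Lemma eq_VixUix (i j : 'I_k.+1) : (Vix i == Uix j) = false.
Proof. by rewrite eq_sym eq_UixVix. Qed.
Lemma eq_UixSix (i : 'I_k.+1) (j : 'I_k) : (Uix i == Six j) = false.
Proof. by rewrite /Uix /Six eq_lrshift. Qed.
Lemma eq_SixUix (i : 'I_k.+1) (j : 'I_k) : (Six j == Uix i) = false.
Proof. by rewrite eq_sym eq_UixSix. Qed.
Lemma eq_VixSix (i : 'I_k.+1) (j : 'I_k) : (Vix i == Six j) = false.
Proof. by rewrite /Vix /Six eq_lrshift. Qed.
Lemma eq_SixVix (i : 'I_k.+1) (j : 'I_k) : (Six j == Vix i) = false.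
Proof. by rewrite eq_sym eq_VixSix. Qed.
Lemma eq_lift0 (i j : 'I_k) : (lift ord0 i == lift ord0 j :> 'I_k.+1) = (i == j).
Proof. exact: (inj_eq (@lift_inj _ ord0)). Qed.
Lemma eq_ord0_lift (i : 'I_k) : (ord0 == lift ord0 i :> 'I_k.+1) = false.
Proof. exact: eq_liftF. Qed.
Lemma eq_lift_ord0 (i : 'I_k) : (lift ord0 i == ord0 :> 'I_k.+1) = false.
Proof. by rewrite eq_sym eq_liftF. Qed.

Definition eq_ix := (eq_Uix, eq_Vix, eq_Six, eq_UixVix, eq_VixUix, eq_UixSix,
  eq_SixUix, eq_VixSix, eq_SixVix, eq_lift0, eq_ord0_lift, eq_lift_ord0).

Lemma big_ix (V : nmodType) (f : 'I_n -> V) :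
  \sum_(m < n) f m = \sum_(j < k.+1) f (Uix j) + \sum_(j < k.+1) f (Vix j)
                     + \sum_(l < k) f (Six l).
Proof. by rewrite /dimF big_split_ord /= big_split_ord. Qed.

Lemma ixP (m : 'I_n) :
  [\/ exists j, m = Uix j, exists j, m = Vix j | exists l, m = Six l].
Proof.
case: (split_ordP m) => [m1 -> | l ->]; last by apply: Or33; exists l.
case: (split_ordP m1) => [j -> | j ->]; first by apply: Or31; exists j.
by apply: Or32; exists j.
Qed.
End Indices.

Lemma natr_andb (R : pzSemiRingType) (a b : bool) : ((a && b)%:R : R) = a%:R * b%:R.
Proof. by case: a; case: b; rewrite /= ?mul0r ?mul1r. Qed.

Lemma big_kronecker (R : pzSemiRingType) (I : finType) (j : I) (f : I -> R) :
  \sum_(i : I) f i * (i == j)%:R = f j.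
Proof.
rewrite (bigD1 j) //= eqxx mulr1 big1 ?addr0 // => i /negPf ->; by rewrite mulr0.
Qed.

Lemma big_kronecker' (R : pzSemiRingType) (I : finType) (j : I) (f : I -> R) :
  \sum_(i : I) f i * (j == i)%:R = f j.
Proof. by under eq_bigr => i _ do rewrite eq_sym; rewrite big_kronecker. Qed.

Section RealDerive.
Variables (R : realType) (x : R).
Implicit Types f g phi : R -> R.

Lemma is_deriveD_eq f g df dg v : is_derive x 1 f df -> is_derive x 1 g dg ->
  v = df + dg -> is_derive x 1 (fun t => f t + g t) v.
Proof. by move=> hf hg ->; exact: is_deriveD. Qed.

Lemma is_deriveM_eq f g df dg v : is_derive x 1 f df -> is_derive x 1 g dg ->
  v = f x * dg + g x * df -> is_derive x 1 (fun t => f t * g t) v.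
Proof. by move=> hf hg ->; exact: is_deriveM. Qed.

Lemma is_derive_sumr m (h : 'I_m -> R -> R) (dh : 'I_m -> R) :
  (forall i, is_derive x 1 (h i) (dh i)) ->
  is_derive x 1 (fun t => \sum_(i < m) h i t) (\sum_(i < m) dh i).
Proof. by move=> H; have := is_derive_sum H; rewrite fct_sumE. Qed.

Lemma is_derive_mulr f df (c : R) : is_derive x 1 f df ->
  is_derive x 1 (fun t => c * f t) (c * df).
Proof.
by move=> hf; apply: (is_deriveM_eq (is_derive_cst c x 1) hf); rewrite mulr0 addr0.
Qed.

Lemma is_derive_affine (p c : R) : is_derive x 1 (fun t => p + t * c) c.
Proof.
have hc : is_derive x 1 (fun t => t * c) c.
  by apply: (is_deriveM_eq (@is_derive_id R R^o x 1) (is_derive_cst c x 1)); simpl; ring.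
by apply: (is_deriveD_eq (is_derive_cst p x 1) hc); rewrite add0r.
Qed.

Lemma is_derive_comp phi f df : is_derive x 1 f df -> derivable phi (f x) 1 ->
  is_derive x 1 (fun t => phi (f t)) (phi^`()%classic (f x) * df).
Proof.
move=> hf dphi; have df1 : derivable f x 1 by case: hf.
apply: DeriveDef.
  by apply/derivable1_diffP; apply: differentiable_comp; exact/derivable1_diffP.
have := derive1_comp df1 dphi; rewrite !derive1E => ->.
by rewrite (@derive_val _ _ _ _ _ _ _ hf).
Qed.
End RealDerive.

Section Coordinates.
Variables (R : realType) (k : nat).
Local Notation n := (dimF k).

Definition kdelta (b m : 'I_n) : R := (b == m)%:R.

Lemma line_coord (P : 'rV[R]_n) t b m :
  (P + t *: delta_mx 0 b) 0 m = P 0 m + t * kdelta b m.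
Proof. by rewrite !mxE eqxx /= eq_sym. Qed.

Lemma partial_is_derive (h : 'rV[R]_n -> R) b P v :
  is_derive (0:R) 1 (fun t => h (P + t *: delta_mx 0 b)) v -> partial h b P = v.
Proof. by move=> H; rewrite /partial derive1E (@derive_val _ _ _ _ _ _ _ H). Qed.

(* The entries of g_F and its Christoffel symbols all have this shape, with
   (phi, psi) = (f, f) for the metric and (f', f) for the symbols. *)
Definition ansatz (phi psi : 'I_k -> R -> R) (al be ga et th : 'I_k -> R) (ka : R)
  (Q : 'rV[R]_n) : R :=
  \sum_(i < k) (al i * phi i (Q 0 (Ui i)) * Q 0 (Six i) + be i * psi i (Q 0 (Ui i))
     + ga i * Q 0 (U0 k) * Q 0 (Six i) + et i * Q 0 (Six i) + th i * Q 0 (U0 k)) + ka.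

Definition partial_ansatz (phi psi : 'I_k -> R -> R) (al be ga et th : 'I_k -> R)
  (P : 'rV[R]_n) (b : 'I_n) : R :=
  \sum_(i < k) (al i * ((phi i)^`()%classic (P 0 (Ui i)) * kdelta b (Ui i) * P 0 (Six i)
                        + phi i (P 0 (Ui i)) * kdelta b (Six i))
     + be i * ((psi i)^`()%classic (P 0 (Ui i)) * kdelta b (Ui i))
     + ga i * (kdelta b (U0 k) * P 0 (Six i) + P 0 (U0 k) * kdelta b (Six i))
     + et i * kdelta b (Six i) + th i * kdelta b (U0 k)).

Lemma partial_ansatzE (phi psi : 'I_k -> R -> R) (al be ga et th : 'I_k -> R) (ka : R)
  (b : 'I_n) (P : 'rV[R]_n) :
  (forall i x, derivable (phi i) x 1) -> (forall i x, derivable (psi i) x 1) ->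
  partial (ansatz phi psi al be ga et th ka) b P = partial_ansatz phi psi al be ga et th P b.
Proof.
move=> hphi hpsi; apply: partial_is_derive.
rewrite /ansatz; under eq_fun => t do under eq_bigr => i _ do rewrite !line_coord.
apply: (is_deriveD_eq _ (is_derive_cst ka _ _)); last by rewrite addr0.
apply: is_derive_sumr => i /=.
set pu := P 0 (Ui i); set ps := P 0 (Six i); set p0 := P 0 (U0 k).
set cu := kdelta b (Ui i); set cs := kdelta b (Six i); set c0 := kdelta b (U0 k).
have hs := is_derive_affine 0 ps cs; have h0 := is_derive_affine 0 p0 c0.
have hphiu := is_derive_comp (is_derive_affine 0 pu cu) (hphi i _).
have hpsiu := is_derive_comp (is_derive_affine 0 pu cu) (hpsi i _).
have h1 := is_deriveM_eq (is_derive_mulr (al i) hphiu) hs erefl.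
have h2 := is_derive_mulr (be i) hpsiu.
have h3 := is_deriveM_eq (is_derive_mulr (ga i) h0) hs erefl.
have h4 := is_derive_mulr (et i) hs.
have h5 := is_derive_mulr (th i) h0.
apply: (is_derive_eq (is_deriveD_eq (is_deriveD_eq (is_deriveD_eq
  (is_deriveD_eq h1 h2 erefl) h3 erefl) h4 erefl) h5 erefl)).
rewrite !mul0r !addr0; ring.
Qed.
End Coordinates.
Arguments kdelta {R k}.

Definition kulkarni_nomizu (R : pzRingType) (T : Type) (h l : T -> T -> R) (x y z w : T) : R :=
  h x z * l y w + h y w * l x z - h x w * l y z - h y z * l x w.

Section Forms.
Variables (R : realType) (k : nat).
Local Notation n := (dimF k).
Implicit Types (M N : 'M[R]_n) (u v : 'rV[R]_n).

Lemma bformE M u v : bform M u v = \sum_(a < n) \sum_(c < n) u 0 a * v 0 c * M a c.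
Proof.
rewrite /bform mxE exchange_big; apply: eq_bigr => c _.
rewrite !mxE mulr_suml; apply: eq_bigr => a _; ring.
Qed.

Lemma bformD M N u v : bform (M + N) u v = bform M u v + bform N u v.
Proof. by rewrite /bform mulmxDr mulmxDl mxE. Qed.

Lemma bformZ (c : R) M u v : bform (c *: M) u v = c * bform M u v.
Proof. by rewrite /bform -scalemxAr -scalemxAl mxE. Qed.

Lemma bform_sum m (M : 'I_m -> 'M[R]_n) u v :
  bform (\sum_(i < m) M i) u v = \sum_(i < m) bform (M i) u v.
Proof. by rewrite /bform mulmx_sumr mulmx_suml summxE. Qed.

Lemma bform_delta (p q : 'I_n) u v : bform (delta_mx p q) u v = u 0 p * v 0 q.
Proof.
rewrite bformE -(big_kronecker p (fun a => u 0 a * v 0 q)); apply: eq_bigr => a _.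
rewrite -(big_kronecker q (fun c => u 0 a * v 0 c * (a == p)%:R)).
by apply: eq_bigr => c _; rewrite mxE natr_andb; ring.
Qed.

Lemma bform_unit M (r c : 'I_n) : bform M (delta_mx 0 r) (delta_mx 0 c) = M r c.
Proof.
rewrite bformE -(big_kronecker r (fun a => M a c)); apply: eq_bigr => a _.
rewrite -(big_kronecker c (fun c' => M a c' * (a == r)%:R)).
by apply: eq_bigr => c' _; rewrite !mxE /=; ring.
Qed.

Lemma mul_row_delta u (p q : 'I_n) : u *m delta_mx p q = u 0 p *: delta_mx 0 q.
Proof.
apply/matrixP => i j; rewrite (ord1 i) !mxE.
rewrite -(big_kronecker p (fun m => u 0 m * (j == q)%:R)).
by apply: eq_bigr => m _; rewrite !mxE natr_andb; ring.
Qed.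

Variables x y z w : 'rV[R]_n.

Definition quadrilinear (T : 'I_n -> 'I_n -> 'I_n -> 'I_n -> R) : R :=
  \sum_(a < n) \sum_(b < n) \sum_(c < n) \sum_(d < n)
    (x 0 a * y 0 b * z 0 c * w 0 d * T a b c d).

Lemma quadrilinearD T1 T2 :
  quadrilinear (fun a b c d => T1 a b c d + T2 a b c d) = quadrilinear T1 + quadrilinear T2.
Proof.
rewrite /quadrilinear -big_split; apply: eq_bigr => a _; rewrite -big_split.
apply: eq_bigr => b _; rewrite -big_split; apply: eq_bigr => c _.
by rewrite -big_split; apply: eq_bigr => d _; rewrite mulrDr.
Qed.

Lemma quadrilinearZl (s : R) T :
  quadrilinear (fun a b c d => s * T a b c d) = s * quadrilinear T.
Proof.
rewrite /quadrilinear mulr_sumr; apply: eq_bigr => a _; rewrite mulr_sumr.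
apply: eq_bigr => b _; rewrite mulr_sumr; apply: eq_bigr => c _.
by rewrite mulr_sumr; apply: eq_bigr => d _; rewrite mulrCA.
Qed.

Lemma quadrilinearZr (s : R) T :
  quadrilinear (fun a b c d => T a b c d * s) = quadrilinear T * s.
Proof.
by rewrite mulrC -quadrilinearZl; congr quadrilinear; do 4!apply: funext => ?; rewrite mulrC.
Qed.

Lemma quadrilinearB T1 T2 :
  quadrilinear (fun a b c d => T1 a b c d - T2 a b c d) = quadrilinear T1 - quadrilinear T2.
Proof.
rewrite quadrilinearD -mulN1r -quadrilinearZl; congr (_ + quadrilinear _).
by do 4!apply: funext => ?; rewrite mulN1r.
Qed.

Lemma quadrilinear_sum m (T : 'I_m -> 'I_n -> 'I_n -> 'I_n -> 'I_n -> R) :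
  quadrilinear (fun a b c d => \sum_(i < m) T i a b c d) = \sum_(i < m) quadrilinear (T i).
Proof.
rewrite /quadrilinear [RHS]exchange_big; apply: eq_bigr => a _.
rewrite [RHS]exchange_big; apply: eq_bigr => b _.
rewrite [RHS]exchange_big; apply: eq_bigr => c _.
rewrite [RHS]exchange_big; apply: eq_bigr => d _.
by rewrite mulr_sumr.
Qed.

Lemma quadrilinear_mul13 M N :
  quadrilinear (fun a b c d => M a c * N b d) = bform M x z * bform N y w.
Proof.
rewrite !bformE /quadrilinear mulr_suml; apply: eq_bigr => a _.
rewrite mulr_suml; under [RHS]eq_bigr => c _ do rewrite mulr_sumr.
rewrite exchange_big; apply: eq_bigr => b _.
by apply: eq_bigr => c _; rewrite mulr_sumr; apply: eq_bigr => d _; ring.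
Qed.

Lemma quadrilinear_mul14 M N :
  quadrilinear (fun a b c d => M a d * N b c) = bform M x w * bform N y z.
Proof.
rewrite !bformE /quadrilinear mulr_suml; apply: eq_bigr => a _.
rewrite mulr_suml; under [RHS]eq_bigr => c _ do rewrite mulr_sumr.
rewrite [RHS]exchange_big; apply: eq_bigr => b _.
under [RHS]eq_bigr => d _ do rewrite mulr_sumr.
by rewrite [RHS]exchange_big; apply: eq_bigr => c _; apply: eq_bigr => d _; ring.
Qed.

Lemma quadrilinear_mul24 M N :
  quadrilinear (fun a b c d => M b d * N a c) = bform M y w * bform N x z.
Proof.
rewrite mulrC -quadrilinear_mul13; congr quadrilinear.
by do 4!apply: funext => ?; rewrite mulrC.
Qed.

Lemma quadrilinear_mul23 M N :
  quadrilinear (fun a b c d => M b c * N a d) = bform M y z * bform N x w.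
Proof.
rewrite mulrC -quadrilinear_mul14; congr quadrilinear.
by do 4!apply: funext => ?; rewrite mulrC.
Qed.

Lemma quadrilinear_kulkarni_nomizu M N :
  quadrilinear (kulkarni_nomizu M N) = kulkarni_nomizu (bform M) (bform N) x y z w.
Proof.
rewrite /kulkarni_nomizu !quadrilinearB quadrilinearD.
by rewrite quadrilinear_mul13 quadrilinear_mul24 quadrilinear_mul14 quadrilinear_mul23.
Qed.
End Forms.

Section Metric.
Variables (R : realType) (k : nat) (eps : 'I_k -> R) (F : 'I_k -> R -> R).
Hypothesis hsmooth : forall (i : 'I_k) (n : nat) (x : R), derivable (derive1n n (F i)) x 1.
Local Notation n := (dimF k).
Local Notation F1 i := ((F i)^`()%classic).
Local Notation g := (gF F eps).

Lemma derivable_F i x : derivable (F i) x 1.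
Proof. by have := @hsmooth i 0 x; rewrite derive1n0. Qed.

Lemma derivable_F1 i x : derivable (F1 i) x 1.
Proof. by have := @hsmooth i 1 x; rewrite derive1n1. Qed.

Definition Amx (i : 'I_k) : 'M[R]_n := symE R (U0 k) (Ui i).
Definition Bmx (i : 'I_k) : 'M[R]_n := delta_mx (Ui i) (Ui i).

Lemma gF_decomp Q : g Q = \sum_(i < k) ((2 * F i (Q 0 (Ui i)) * Q 0 (Six i)) *: Amx i
                 + (- 2 * Q 0 (U0 k) * Q 0 (Six i)) *: Bmx i) + modelG eps.
Proof. by rewrite /gF /modelG addrA. Qed.

Lemma gF_ansatz r c : (fun Q => g Q r c) =
  ansatz F F (fun i => 2 * Amx i r c) (fun=> 0) (fun i => -2 * Bmx i r c)
         (fun=> 0) (fun=> 0) (modelG eps r c).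
Proof.
apply: funext => Q; rewrite gF_decomp /ansatz mxE summxE; congr (_ + _).
by apply: eq_bigr => i _; rewrite !mxE; ring.
Qed.

Lemma partial_gF r c b P : partial (fun Q => g Q r c) b P =
  \sum_(i < k) (2 * Amx i r c * (F1 i (P 0 (Ui i)) * kdelta b (Ui i) * P 0 (Six i)
                                  + F i (P 0 (Ui i)) * kdelta b (Six i))
              - 2 * Bmx i r c * (kdelta b (U0 k) * P 0 (Six i) + P 0 (U0 k) * kdelta b (Six i))).
Proof.
rewrite gF_ansatz partial_ansatzE; try exact: derivable_F.
by apply: eq_bigr => i _; ring.
Qed.

(* [koszul M p d b c] is d_b h_dc + d_c h_db - d_d h_bc for the matrix field
   h = x_p M, x_p the p-th coordinate. *)
Definition koszul (M : 'M[R]_n) (p d b c : 'I_n) : R :=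
  M d c * kdelta b p + M d b * kdelta c p - M b c * kdelta d p.

Lemma Gamma1_ansatz d b c : (fun Q => Gamma1 g Q d b c) =
  ansatz (fun i => F1 i) F (fun i => koszul (Amx i) (Ui i) d b c)
    (fun i => koszul (Amx i) (Six i) d b c) (fun=> 0)
    (fun i => - koszul (Bmx i) (U0 k) d b c) (fun i => - koszul (Bmx i) (Six i) d b c) 0.
Proof.
apply: funext => Q; rewrite /Gamma1 !partial_gF /ansatz addr0.
rewrite -big_split /= -sumrB mulr_suml; apply: eq_bigr => i _.
by rewrite /koszul; field.
Qed.

Lemma partial_Gamma1 a d b c P : partial (fun Q => Gamma1 g Q d b c) a P =
  partial_ansatz (fun i => F1 i) F (fun i => koszul (Amx i) (Ui i) d b c)
    (fun i => koszul (Amx i) (Six i) d b c) (fun=> 0)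
    (fun i => - koszul (Bmx i) (U0 k) d b c) (fun i => - koszul (Bmx i) (Six i) d b c) P a.
Proof.
by rewrite Gamma1_ansatz partial_ansatzE //; [exact: derivable_F1 | exact: derivable_F].
Qed.

Definition Gamma_s (P : 'rV[R]_n) (i : 'I_k) : 'M[R]_n :=
  (- F i (P 0 (Ui i))) *: Amx i + P 0 (U0 k) *: Bmx i.

Lemma Gamma1_Vix P j b c : Gamma1 g P (Vix j) b c = 0.
Proof.
rewrite (congr1 (fun h => h P) (Gamma1_ansatz _ b c)) /ansatz addr0 big1 // => i _.
rewrite /koszul /Amx /Bmx /symE /kdelta !mxE /U0 /Ui !eq_ix /=; ring.
Qed.

Lemma Gamma1_Six P l b c : Gamma1 g P (Six l) b c = Gamma_s P l b c.
Proof.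
rewrite (congr1 (fun h => h P) (Gamma1_ansatz _ b c)) /ansatz addr0.
rewrite -(big_kronecker l (fun i => Gamma_s P i b c)); apply: eq_bigr => i _.
rewrite /Gamma_s /koszul /Amx /Bmx /symE /kdelta !mxE /U0 /Ui !eq_ix /= [l == i]eq_sym.
ring.
Qed.
End Metric.
Arguments Amx {R k}.
Arguments Bmx {R k}.

Section InverseMetric.
Variables (R : realType) (k : nat) (eps : 'I_k -> R) (F : 'I_k -> R -> R).
Hypothesis heps : forall i, eps i = 1 \/ eps i = -1.
Variable P : 'rV[R]_(dimF k).
Local Notation n := (dimF k).
Local Notation g := (gF F eps P).

Lemma gF_sym r c : g r c = g c r.
Proof.
rewrite /gF !mxE !summxE; congr (_ + _ + _); apply: eq_bigr => i _;
  by rewrite !mxE !natr_andb; ring.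
Qed.

Lemma gF_Vix r j : g r (Vix j) = (r == Uix j)%:R.
Proof.
rewrite gF_decomp /modelG !mxE !summxE big1 ?add0r; last first.
  by move=> i _; rewrite !mxE /U0 /Ui !eq_ix /= ?andbF ?mulr0n; ring.
rewrite [X in _ + X]big1 ?addr0; last first.
  by move=> i _; rewrite !mxE !eq_ix /= ?andbF ?mulr0n; ring.
rewrite -(big_kronecker j (fun j0 => (r == Uix j0)%:R : R)); apply: eq_bigr => j0 _.
by rewrite !mxE !eq_ix /= ?andbF addr0 natr_andb [j == _]eq_sym.
Qed.

Lemma gF_Six r l : g r (Six l) = eps l * (r == Six l)%:R.
Proof.
rewrite gF_decomp /modelG !mxE !summxE big1 ?add0r; last first.
  by move=> i _; rewrite !mxE /U0 /Ui !eq_ix /= ?andbF ?mulr0n; ring.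
rewrite [X in X + _]big1 ?add0r; last first.
  by move=> i _; rewrite !mxE !eq_ix /= ?andbF ?mulr0n; ring.
rewrite -(big_kronecker l (fun i => eps i * (r == Six i)%:R)); apply: eq_bigr => i _.
by rewrite !mxE !eq_ix natr_andb [l == _]eq_sym; ring.
Qed.

Lemma eps_sqr i : eps i * eps i = 1.
Proof. by case: (heps i) => ->; rewrite ?mulr1 ?mulrNN ?mulr1. Qed.

Lemma gF_unit : g \in unitmx.
Proof.
rewrite -row_free_unit; apply: inj_row_free => v hv.
have hc c : \sum_(m < n) v 0 m * g m c = 0.
  by have := congr1 (fun M : 'M[R]_(1, n) => M 0 c) hv; rewrite !mxE.
have hU j : v 0 (Uix j) = 0.
  by have := hc (Vix j); under eq_bigr => m _ do rewrite gF_Vix; rewrite big_kronecker.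
have hS l : v 0 (Six l) = 0.
  have := hc (Six l); under eq_bigr => m _ do rewrite gF_Six mulrA; rewrite big_kronecker.
  move/eqP; rewrite mulf_eq0 => /orP [/eqP // | /eqP e].
  by have := eps_sqr l; rewrite e mul0r => /eqP; rewrite eq_sym oner_eq0.
have hV j : v 0 (Vix j) = 0.
  have := hc (Uix j); rewrite big_ix.
  rewrite big1 ?add0r; last by move=> j0 _; rewrite hU mul0r.
  rewrite [X in _ + X]big1 ?addr0; last by move=> l _; rewrite gF_sym gF_Six eq_ix !mulr0.
  by under eq_bigr => j0 _ do rewrite gF_sym gF_Vix eq_Uix; rewrite big_kronecker'.
apply/matrixP => i m; rewrite (ord1 i) mxE.
by case: (ixP m) => [[j ->]|[j ->]|[l ->]].
Qed.

Lemma invmx_gF_Uix e j : invmx g e (Uix j) = (e == Vix j)%:R.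
Proof.
have := congr1 (fun M : 'M[R]_n => M e (Vix j)) (mulVmx gF_unit); rewrite !mxE.
by under eq_bigr => m _ do rewrite gF_Vix; rewrite big_kronecker.
Qed.

Lemma invmx_gF_Six e l : invmx g e (Six l) = eps l * (e == Six l)%:R.
Proof.
have := congr1 (fun M : 'M[R]_n => M e (Six l)) (mulVmx gF_unit); rewrite !mxE.
under eq_bigr => m _ do rewrite gF_Six mulrA; rewrite big_kronecker => <-.
by rewrite mulrCA eps_sqr mulr1.
Qed.

Lemma invmx_gF_contract (X Y : 'I_n -> R) :
  (forall j, X (Vix j) = 0) -> (forall j, Y (Vix j) = 0) ->
  \sum_(e < n) \sum_(f < n) invmx g e f * (X f * Y e)
  = \sum_(l < k) eps l * (X (Six l) * Y (Six l)).
Proof.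
move=> hX hY; under eq_bigr => e _ do rewrite big_ix.
rewrite !big_split /= exchange_big big1 ?add0r => [|j _]; last first.
  transitivity (\sum_(e < n) X (Uix j) * Y e * (e == Vix j)%:R).
    by apply: eq_bigr => e _; rewrite invmx_gF_Uix; ring.
  by rewrite big_kronecker hY mulr0.
rewrite big1 ?add0r => [|e _]; last by rewrite big1 // => j _; rewrite hX !mul0r mulr0.
rewrite exchange_big; apply: eq_bigr => l _.
rewrite -(big_kronecker (Six l) (fun e => eps l * (X (Six l) * Y e))).
by apply: eq_bigr => e _; rewrite invmx_gF_Six; ring.
Qed.
End InverseMetric.

Section Curvature.
Variables (R : realType) (k : nat) (eps : 'I_k -> R) (F : 'I_k -> R -> R).
Hypothesis hsmooth : forall (i : 'I_k) (n : nat) (x : R), derivable (derive1n n (F i)) x 1.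
Hypothesis heps : forall i, eps i = 1 \/ eps i = -1.
Local Notation n := (dimF k).
Local Notation F1 i := ((F i)^`()%classic).
Local Notation F2 i := (((F i)^`())^`()%classic).
Local Notation g := (gF F eps).

(* Hessians of the coefficients 2 f_i(u_i) s_i and -2 u_0 s_i of [Amx i] and
   [Bmx i] in g_F. *)
Definition hessA (P : 'rV[R]_n) (i : 'I_k) : 'M[R]_n :=
  (2 * F2 i (P 0 (Ui i)) * P 0 (Six i)) *: Bmx i
  + (2 * F1 i (P 0 (Ui i))) *: symE R (Ui i) (Six i).
Definition hessB (i : 'I_k) : 'M[R]_n := (-2) *: symE R (Six i) (U0 k).

Definition curv_term (T : Type) (hA A hB B G : T -> T -> R) (e : R) (x y z w : T) : R :=
  (kulkarni_nomizu hA A x y z w + kulkarni_nomizu hB B x y z w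
   + e * kulkarni_nomizu G G x y z w) / 2.

Lemma Rcoord_gF P a b c d : Rcoord g P a b c d =
  \sum_(i < k) curv_term (hessA P i) (Amx i) (hessB i) (Bmx i) (Gamma_s F P i) (eps i) a b c d.
Proof.
rewrite /Rcoord !partial_Gamma1 //.
under eq_bigr => e _ do under eq_bigr => f _ do rewrite mulrBr.
under eq_bigr => e _ do rewrite sumrB.
rewrite sumrB !invmx_gF_contract //; try by move=> j; rewrite Gamma1_Vix.
rewrite /partial_ansatz -!sumrB; apply: eq_bigr => i _; rewrite !(Gamma1_Six _ hsmooth).
rewrite /curv_term /kulkarni_nomizu /hessA /hessB /Gamma_s /koszul /Amx /Bmx /symE /kdelta.
by rewrite !mxE !natr_andb; field.
Qed.

Lemma curvP_gF P x y z w : curvP g P x y z w =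
  \sum_(i < k) curv_term (bform (hessA P i)) (bform (Amx i)) (bform (hessB i)) (bform (Bmx i))
                         (bform (Gamma_s F P i)) (eps i) x y z w.
Proof.
rewrite /curvP -[LHS]/(quadrilinear x y z w (Rcoord g P)).
have -> : Rcoord g P = fun a b c d => \sum_(i < k)
    curv_term (hessA P i) (Amx i) (hessB i) (Bmx i) (Gamma_s F P i) (eps i) a b c d.
  by do 4!apply: funext => ?; exact: Rcoord_gF.
rewrite quadrilinear_sum; apply: eq_bigr => i _; rewrite /curv_term.
by rewrite quadrilinearZr 2!quadrilinearD quadrilinearZl !quadrilinear_kulkarni_nomizu.
Qed.
End Curvature.

Section NormalizingFrame.
Variables (R : realType) (k : nat) (eps : 'I_k -> R) (F : 'I_k -> R -> R).
Variable P : 'rV[R]_(dimF k).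
Local Notation n := (dimF k).
Local Notation F1 i := ((F i)^`()%classic).

Definition V0 : 'I_n := Vix (ord0 : 'I_k.+1).
Definition Vi (i : 'I_k) : 'I_n := Vix (lift ord0 i).

Definition Fp1 i := F1 i (P 0 (Ui i)) + 1.
(* [mu], [nu] and [rho] normalise the curvature ([nu i * mu i ^+ 2 = Fp1 i]);
   [kappa], [tau], [sigma] and [omega] are then forced by the isometry condition. *)
Definition mu i : R := Num.sqrt `|Fp1 i|.
Definition nu i : R := if 0 < Fp1 i then 1 else -1.
Definition rho i : R := eps i * F i (P 0 (Ui i)) ^+ 2 / (2 * mu i ^+ 2).
Definition kappa i : R := - eps i * nu i * rho i.
Definition tau i : R := - eps i * rho i ^+ 2 / 2.
Definition sigma i : R := 2 * F i (P 0 (Ui i)) * P 0 (Six i).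
Definition omega i : R := - P 0 (U0 k) * P 0 (Six i) / mu i.

Definition Phi : 'M[R]_n :=
  delta_mx (U0 k) (U0 k) + delta_mx V0 V0 +
  \sum_(i < k) (mu i *: delta_mx (Ui i) (Ui i) + nu i *: delta_mx (Six i) (Six i)
     + rho i *: delta_mx (U0 k) (Six i) + kappa i *: delta_mx (Six i) V0
     + tau i *: delta_mx (U0 k) V0 + sigma i *: delta_mx (Ui i) V0
     + (mu i)^-1 *: delta_mx (Vi i) (Vi i) + omega i *: delta_mx (Ui i) (Vi i)).

Lemma mul_row_Phi (x : 'rV[R]_n) : x *m Phi =
  x 0 (U0 k) *: delta_mx 0 (U0 k) + x 0 V0 *: delta_mx 0 V0 +
  \sum_(i < k) ((mu i * x 0 (Ui i)) *: delta_mx 0 (Ui i)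
     + (nu i * x 0 (Six i)) *: delta_mx 0 (Six i)
     + (rho i * x 0 (U0 k)) *: delta_mx 0 (Six i) + (kappa i * x 0 (Six i)) *: delta_mx 0 V0
     + (tau i * x 0 (U0 k)) *: delta_mx 0 V0 + (sigma i * x 0 (Ui i)) *: delta_mx 0 V0
     + ((mu i)^-1 * x 0 (Vi i)) *: delta_mx 0 (Vi i)
     + (omega i * x 0 (Ui i)) *: delta_mx 0 (Vi i)).
Proof.
rewrite /Phi !mulmxDr mulmx_sumr !mul_row_delta; congr (_ + _).
by apply: eq_bigr => i _; rewrite !mulmxDr -!scalemxAr !mul_row_delta !scalerA.
Qed.

Local Ltac ix_simp := rewrite /V0 /Vi /U0 /Ui ?eq_ix /= ?mulr0n ?mulr1n.

Lemma Phi_U0 (x : 'rV[R]_n) : (x *m Phi) 0 (U0 k) = x 0 (U0 k).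
Proof.
rewrite mul_row_Phi !(mxE, summxE) big1; first by ix_simp; ring.
by move=> i _; rewrite !mxE; ix_simp; ring.
Qed.

Lemma Phi_Ui (x : 'rV[R]_n) j : (x *m Phi) 0 (Ui j) = mu j * x 0 (Ui j).
Proof.
rewrite mul_row_Phi !(mxE, summxE).
rewrite (eq_bigr (fun i => mu i * x 0 (Ui i) * (j == i)%:R)) => [|i _].
  by rewrite big_kronecker'; ix_simp; ring.
by rewrite !mxE; ix_simp; rewrite eq_sym; ring.
Qed.

Lemma Phi_Six (x : 'rV[R]_n) j :
  (x *m Phi) 0 (Six j) = nu j * x 0 (Six j) + rho j * x 0 (U0 k).
Proof.
rewrite mul_row_Phi !(mxE, summxE).
rewrite (eq_bigr (fun i => (nu i * x 0 (Six i) + rho i * x 0 (U0 k)) * (j == i)%:R)) => [|i _].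
  by rewrite big_kronecker'; ix_simp; ring.
by rewrite !mxE; ix_simp; rewrite eq_sym; ring.
Qed.

Lemma Phi_V0 (x : 'rV[R]_n) : (x *m Phi) 0 V0 = x 0 V0 +
  \sum_(i < k) (kappa i * x 0 (Six i) + tau i * x 0 (U0 k) + sigma i * x 0 (Ui i)).
Proof.
rewrite mul_row_Phi !(mxE, summxE).
rewrite (eq_bigr (fun i => kappa i * x 0 (Six i) + tau i * x 0 (U0 k) + sigma i * x 0 (Ui i)))
  => [|i _]; first by ix_simp; ring.
by rewrite !mxE; ix_simp; ring.
Qed.

Lemma Phi_Vi (x : 'rV[R]_n) j :
  (x *m Phi) 0 (Vi j) = (mu j)^-1 * x 0 (Vi j) + omega j * x 0 (Ui j).
Proof.
rewrite mul_row_Phi !(mxE, summxE).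
rewrite (eq_bigr (fun i => ((mu i)^-1 * x 0 (Vi i) + omega i * x 0 (Ui i)) * (j == i)%:R))
  => [|i _]; first by rewrite big_kronecker'; ix_simp; ring.
by rewrite !mxE; ix_simp; rewrite eq_sym; ring.
Qed.

Lemma bform_modelG (u v : 'rV[R]_n) : bform (modelG eps) u v =
  u 0 (U0 k) * v 0 V0 + u 0 V0 * v 0 (U0 k) +
  \sum_(i < k) (u 0 (Ui i) * v 0 (Vi i) + u 0 (Vi i) * v 0 (Ui i)
                + eps i * (u 0 (Six i) * v 0 (Six i))).
Proof.
rewrite /modelG bformD !bform_sum big_ord_recl /= /symE bformD !bform_delta.
under eq_bigr => i _ do rewrite bformD !bform_delta.
under [X in _ + X]eq_bigr => i _ do rewrite bformZ bform_delta.
by rewrite -addrA -big_split.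
Qed.

Lemma bform_gF (u v : 'rV[R]_n) : bform (gF F eps P) u v =
  u 0 (U0 k) * v 0 V0 + u 0 V0 * v 0 (U0 k) +
  \sum_(i < k) (sigma i * (u 0 (U0 k) * v 0 (Ui i) + u 0 (Ui i) * v 0 (U0 k))
                - 2 * P 0 (U0 k) * P 0 (Six i) * (u 0 (Ui i) * v 0 (Ui i))
                + (u 0 (Ui i) * v 0 (Vi i) + u 0 (Vi i) * v 0 (Ui i)
                + eps i * (u 0 (Six i) * v 0 (Six i)))).
Proof.
rewrite gF_decomp bformD bform_modelG bform_sum addrC -addrA -big_split; congr (_ + _).
apply: eq_bigr => i _ /=.
by rewrite bformD !bformZ /Amx /Bmx /symE bformD !bform_delta /sigma; ring.
Qed.

Hypothesis heps : forall i, eps i = 1 \/ eps i = -1.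
Hypothesis hF : forall (i : 'I_k) (u : R), derive1 (F i) u + 1 != 0.

Lemma mu_neq0 i : mu i != 0.
Proof. by rewrite /mu sqrtr_eq0 normr_le0; apply: hF. Qed.

Lemma nu_mu_cases i :
  (nu i = 1 /\ mu i ^+ 2 = Fp1 i) \/ (nu i = -1 /\ mu i ^+ 2 = - Fp1 i).
Proof.
have hsq : mu i ^+ 2 = `|Fp1 i| by rewrite /mu sqr_sqrtr // normr_ge0.
rewrite /nu hsq; case: ifP => h; [left | right]; split => //.
  by rewrite gtr0_norm.
by rewrite ler0_norm // leNgt h.
Qed.

Lemma Phi_isometry (x y : 'rV[R]_n) :
  bform (modelG eps) (x *m Phi) (y *m Phi) = bform (gF F eps P) x y.
Proof.
rewrite bform_modelG bform_gF !Phi_U0 !Phi_V0.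
under [X in _ + X = _]eq_bigr => i _ do rewrite !Phi_Ui !Phi_Vi !Phi_Six.
rewrite mulrDr mulrDl mulr_sumr mulr_suml -!addrA; congr (_ + _).
rewrite addrCA; congr (_ + _).
rewrite -!big_split; apply: eq_bigr => i /= _.
have hmu := mu_neq0 i.
rewrite /kappa /tau /sigma /omega /rho.
by case: (nu_mu_cases i) => [[-> _]|[-> _]]; field.
Qed.

Lemma Phi_unit : Phi \in unitmx.
Proof.
have hM : Phi *m modelG eps *m Phi^T = gF F eps P.
  apply/matrixP => r c.
  by rewrite -[LHS]bform_unit -[RHS]bform_unit -Phi_isometry /bform trmx_mul !mulmxA.
by have := gF_unit F heps P; rewrite -hM !unitmx_mul => /andP [/andP []].
Qed.

Hypothesis hsmooth : forall (i : 'I_k) (n : nat) (x : R), derivable (derive1n n (F i)) x 1.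

Lemma Phi_curvature (x y z w : 'rV[R]_n) :
  modelR (x *m Phi) (y *m Phi) (z *m Phi) (w *m Phi) = curvP (gF F eps) P x y z w.
Proof.
rewrite (curvP_gF hsmooth heps) /modelR; apply: eq_bigr => i _.
rewrite /wedge2 !Phi_U0 !Phi_Ui !Phi_Six.
rewrite /curv_term /kulkarni_nomizu /hessA /hessB /Gamma_s /Amx /Bmx /symE.
rewrite !(bformD, bformZ, bform_delta).
have hmu := mu_neq0 i.
have -> : F1 i (P 0 (Ui i)) = Fp1 i - 1 by rewrite /Fp1 addrK.
rewrite /rho; case: (nu_mu_cases i) => [[-> <-]|[-> hm]]; first by field.
by rewrite -[Fp1 i]opprK -hm; field.
Qed.
End NormalizingFrame.

Theorem theorem1p4 (R : realType) (k : nat) (hk : (1 <= k)%N)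
  (eps : 'I_k -> R) (heps : forall i, eps i = 1 \/ eps i = -1)
  (F : 'I_k -> R -> R)
  (hsmooth : forall (i : 'I_k) (n : nat) (x : R), derivable (derive1n n (F i)) x 1)
  (hF : forall (i : 'I_k) (u : R), derive1 (F i) u + 1 != 0) :
  forall P : 'rV[R]_(dimF k),
    exists Phi : 'M[R]_(dimF k),
      [/\ Phi \in unitmx,
          forall x y : 'rV[R]_(dimF k),
            bform (modelG eps) (x *m Phi) (y *m Phi) = bform (gF F eps P) x y
        & forall x y z w : 'rV[R]_(dimF k),
            modelR (x *m Phi) (y *m Phi) (z *m Phi) (w *m Phi)
              = curvP (gF F eps) P x y z w].
Proof.
move=> P; exists (Phi eps F P); split.
- exact: Phi_unit heps hF.
- exact: Phi_isometry hF.
- exact: Phi_curvature heps hF hsmooth.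
Qed.
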